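(* (Setting as in the context.) It holds that $$\mathcal F_{p+1}\mathcal F_{p+1}^*+\sigma^{-1}\Sigma_{f_{p+1}}+\begin{pmatrix}\widehat{\mathcal T}_{f_p}&0\\0&\mathcal T_{\theta_p}\end{pmatrix}\succ0\iff \mathcal F\mathcal F^*+\sigma^{-1}\Sigma_f+\mathcal T_f\succ0,$$ $$\mathcal G_{q+1}\mathcal G_{q+1}^*+\sigma^{-1}\Sigma_{g_{q+1}}+\begin{pmatrix}\widehat{\mathcal T}_{g_q}&0\\0&\mathcal T_{\varphi_q}\end{pmatrix}\succ0\iff \mathcal G\mathcal G^*+\sigma^{-1}\Sigma_g+\mathcal T_g\succ0.$$
   Context: Let $p,q\ge1$ be integers, $\mathcal U,\mathcal V,\mathcal X,\mathcal Y_i,\mathcal Z_j$ real finite-dimensional Euclidean spaces; $\mathcal F:\mathcal X\to\mathcal U$, $\mathcal G:\mathcal X\to\mathcal V$, $\mathcal A_i:\mathcal X\to\mathcal Y_i$ ($i=1..p$), $\mathcal B_j:\mathcal X\to\mathcal Z_j$ ($j=1..q$) linear; $\sigma>0$; $\mathcal P_i,\mathcal Q_j$ self-adjoint positive semidefinite on $\mathcal Y_i,\mathcal Z_j$; $\Sigma_f,\Sigma_g$ self-adjoint positive semidefinite on $\mathcal U,\mathcal V$ (in the paper, the operators with $\langle\xi-\tilde\xi,u-\tilde u\rangle\ge\|u-\tilde u\|^2_{\Sigma_f}$ for subgradients of closed proper convex $f$, and likewise for $g$). $\mathcal E_{\theta_i}\succ0$ self-adjoint with $\mathcal E_{\theta_i}\succeq\sigma^{-1}\mathcal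 P_i+\mathcal A_i\mathcal A_i^*$, $\mathcal T_{\theta_i}:=\mathcal E_{\theta_i}-\sigma^{-1}\mathcal P_i-\mathcal A_i\mathcal A_i^*$; $\mathcal E_{\varphi_j}\succ0$ self-adjoint with $\mathcal E_{\varphi_j}\succeq\sigma^{-1}\mathcal Q_j+\mathcal B_j\mathcal B_j^*$, $\mathcal T_{\varphi_j}:=\mathcal E_{\varphi_j}-\sigma^{-1}\mathcal Q_j-\mathcal B_j\mathcal B_j^*$. $\mathcal T_f,\mathcal T_g$ self-adjoint positive semidefinite. $\mathcal F_1:=\mathcal F$, $\mathcal F_{i+1}x:=(\mathcal Fx,\mathcal A_1x,\dots,\mathcal A_ix)$; $\widehat{\mathcal T}_{f_1}:=\mathcal T_f+\mathcal F_1\mathcal A_1^*\mathcal E_{\theta_1}^{-1}\mathcal A_1\mathcal F_1^*$, $\widehat{\mathcal T}_{f_i}:=\mathrm{diag}(\widehat{\mathcal T}_{f_{i-1}},\mathcal T_{\theta_{i-1}})+\mathcal F_i\mathcal A_i^*\mathcal E_{\theta_i}^{-1}\mathcal A_i\mathcal F_i^*$ ($i=2..p$); $\Sigma_{f_1}:=\Sigma_f$, $\Sigma_{f_i}:=\mathrm{diag}(\Sigma_{f_{i-1}},\mathcal P_{i-1})$ ($i=2..p+1$). Analogously $\mathcal G_1:=\mathcal G$, $\mathcal G_{j+1}x:=(\mathcal Gx,\mathcal B_1x,\dots,\mathcal B_jx)$; $\widehat{\mathcal T}_{g_1}:=\mathcal T_g+\mathcal G_1\mathcal B_1^*\mathcal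 E_{\varphi_1}^{-1}\mathcal B_1\mathcal G_1^*$, $\widehat{\mathcal T}_{g_j}:=\mathrm{diag}(\widehat{\mathcal T}_{g_{j-1}},\mathcal T_{\varphi_{j-1}})+\mathcal G_j\mathcal B_j^*\mathcal E_{\varphi_j}^{-1}\mathcal B_j\mathcal G_j^*$ ($j=2..q$); $\Sigma_{g_1}:=\Sigma_g$, $\Sigma_{g_j}:=\mathrm{diag}(\Sigma_{g_{j-1}},\mathcal Q_{j-1})$ ($j=2..q+1$). $\succ0$ means positive definite. *)

From HB Require Import structures.
From mathcomp Require Import all_boot all_order all_algebra.
Set Implicit Arguments. Unset Strict Implicit. Unset Printing Implicit Defensive.
Import Order.TTheory GRing.Theory Num.Theory.
Local Open Scope ring_scope.

(* Finite-dimensional Euclidean spaces are modelled as column-vector spaces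
   'cV[R]_n with the standard inner product; a linear map X -> Y is a matrix
   'M_(dimY, dimX) acting on the left; the adjoint is the transpose. *)

Definition psdmx (R : realFieldType) (n : nat) (M : 'M[R]_n) : Prop :=
  M^T = M /\ forall x : 'cV[R]_n, 0 <= (x^T *m M *m x) 0 0.

Definition pdmx (R : realFieldType) (n : nat) (M : 'M[R]_n) : Prop :=
  M^T = M /\ forall x : 'cV[R]_n, x != 0 -> 0 < (x^T *m M *m x) 0 0.

Section Chain.
Variables (R : realFieldType) (nx nu : nat) (ny : nat -> nat).
Variables (F : 'M[R]_(nu, nx)) (A : forall i, 'M[R]_(ny i, nx)).
Variables (P E : forall i, 'M[R]_(ny i)).
Variables (sigma : R) (Tf Sf : 'M[R]_nu).

(* 0-based indexing: A i here is the paper's A_{i+1}, etc. *)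

Fixpoint chdim (k : nat) : nat :=
  match k with 0 => nu | k'.+1 => chdim k' + ny k' end.

(* chF k = paper's F_{k+1} : x |-> (F x, A_1 x, ..., A_k x) *)
Fixpoint chF (k : nat) : 'M[R]_(chdim k, nx) :=
  match k return 'M[R]_(chdim k, nx) with
  | 0 => F
  | k'.+1 => col_mx (chF k') (A k')
  end.

(* Ttheta i = paper's T_{theta_{i+1}} = E - sigma^{-1} P - A A^* *)
Definition Ttheta (i : nat) : 'M[R]_(ny i) :=
  E i - sigma^-1 *: P i - A i *m (A i)^T.

(* chT k = paper's hat T_{f_{k+1}} *)
Fixpoint chT (k : nat) : 'M[R]_(chdim k) :=
  match k return 'M[R]_(chdim k) with
  | 0 => Tf + chF 0 *m (A 0)^T *m invmx (E 0) *m A 0 *m (chF 0)^T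
  | k'.+1 => block_mx (chT k') 0 0 (Ttheta k')
             + chF k'.+1 *m (A k'.+1)^T *m invmx (E k'.+1) *m A k'.+1
                 *m (chF k'.+1)^T
  end.

(* chSig k = paper's Sigma_{f_{k+1}} = diag(Sigma_f, P_1, ..., P_k) *)
Fixpoint chSig (k : nat) : 'M[R]_(chdim k) :=
  match k return 'M[R]_(chdim k) with
  | 0 => Sf
  | k'.+1 => block_mx (chSig k') 0 0 (P k')
  end.

(* chDiag p (p >= 1) = paper's diag(hat T_{f_p}, T_{theta_p}) *)
Definition chDiag (k : nat) : 'M[R]_(chdim k) :=
  match k return 'M[R]_(chdim k) with
  | 0 => 0
  | k'.+1 => block_mx (chT k') 0 0 (Ttheta k')
  end.

End Chain.

From HB Require Import structures.
From mathcomp Require Import all_boot all_order all_algebra.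
Import Order.TTheory GRing.Theory Num.Theory.
Local Open Scope ring_scope.

(* Each step of the chain is a Schur-complement argument: with
   Z = [C A^T E^{-1}; I], the matrix of step k+1 is diag(N, 0) + Z E Z^T where
   N is the matrix of step k.  Since E is positive definite, x^T (.) x splits
   as u^T N u + |Z^T x|_E^2, and choosing the lower part of x to kill
   Z^T x shows that positivity of the step k+1 matrix is equivalent to
   positivity of N.  Induction along the chain reduces to step 0, which is
   F F^* + sigma^{-1} Sigma_f + T_f. *)

Set Implicit Arguments.
Unset Strict Implicit.

Section QuadraticForm.
Variable R : realFieldType.

Definition qform n (M : 'M[R]_n) (x : 'cV[R]_n) : R := (x^T *m M *m x) 0 0.

Lemma qformD n (M N : 'M[R]_n) x : qform (M + N) x = qform M x + qform N x.
Proof. by rewrite /qform mulmxDr mulmxDl mxE. Qed.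

Lemma qform_conj n m (Z : 'M[R]_(n, m)) (E : 'M_m) x :
  qform (Z *m E *m Z^T) x = qform E (Z^T *m x).
Proof. by rewrite /qform trmx_mul trmxK !mulmxA. Qed.

Lemma qform_block_diag0 n m (N : 'M[R]_n) (u : 'cV_n) (y : 'cV_m) :
  qform (block_mx N 0 0 0) (col_mx u y) = qform N u.
Proof.
by rewrite /qform tr_col_mx mul_row_block !mulmx0 !addr0 mul_row_col mul0mx addr0.
Qed.

Lemma qform0 n (M : 'M[R]_n) : qform M 0 = 0.
Proof. by rewrite /qform mulmx0 mxE. Qed.

Lemma pdmx_qform_ge0 n (E : 'M[R]_n) x : pdmx E -> 0 <= qform E x.
Proof.
case=> _ posE; have [->|x0] := eqVneq x 0; first by rewrite qform0.
exact/ltW/posE.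
Qed.

Lemma pdmx_unit n (E : 'M[R]_n) : pdmx E -> E \in unitmx.
Proof.
case=> _ posE; rewrite unitmxE unitfE; apply/negP => /det0P [v v0 vE].
have vT0 : v^T != 0 by rewrite -(inj_eq (@trmx_inj _ _ _)) trmxK trmx0.
by have := posE _ vT0; rewrite trmxK vE mul0mx mxE ltxx.
Qed.

Lemma pdmx_diag0_add_conj n m (N : 'M[R]_n) (W : 'M_(n, m)) (E : 'M_m) :
  N^T = N -> pdmx E ->
  pdmx (block_mx N 0 0 0 + col_mx W 1%:M *m E *m (col_mx W 1%:M)^T) <-> pdmx N.
Proof.
move=> symN pdE; set Z := col_mx W 1%:M.
have qformM u y : qform (block_mx N 0 0 0 + Z *m E *m Z^T) (col_mx u y)
                  = qform N u + qform E (W^T *m u + y).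
  by rewrite qformD qform_conj qform_block_diag0 tr_col_mx trmx1 mul_row_col mul1mx.
have symM : (block_mx N 0 0 0 + Z *m E *m Z^T)^T = block_mx N 0 0 0 + Z *m E *m Z^T.
  by rewrite linearD /= tr_block_mx symN !trmx0 !trmx_mul trmxK pdE.1 mulmxA.
split=> [[_ posM] | [_ posN]]; split=> //.
  move=> u u0; have x0 : col_mx u (- (W^T *m u)) != 0.
    by apply: contra u0; rewrite -col_mx0 => /eqP/eq_col_mx [-> _].
  by have := posM _ x0; rewrite -/(qform _ _) qformM addrN qform0 addr0.
move=> x x0; rewrite -/(qform _ _) -(vsubmxK x) qformM.
have [u0 | u0] := eqVneq (usubmx x) 0.
  rewrite u0 mulmx0 add0r qform0 add0r; apply: pdE.2.
  by apply: contra x0 => /eqP y0; rewrite -(vsubmxK x) u0 y0 col_mx0.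
exact/ltr_wpDr/posN/u0/pdmx_qform_ge0.
Qed.

Lemma schur_step_decomposition n m k (C : 'M[R]_(n, k)) (A : 'M_(m, k))
    (S T : 'M_n) (P E : 'M_m) (s : R) :
  E \in unitmx -> E^T = E ->
  let Z := col_mx (C *m A^T *m invmx E) 1%:M in
  col_mx C A *m (col_mx C A)^T + s *: block_mx S 0 0 P
    + block_mx (T + C *m A^T *m invmx E *m A *m C^T) 0 0 (E - s *: P - A *m A^T)
  = block_mx (C *m C^T + s *: S + T) 0 0 0 + Z *m E *m Z^T.
Proof.
move=> unitE symE Z.
rewrite /Z !tr_col_mx mul_col_mx mul_col_row !trmx_mul trmx_inv symE !trmxK trmx1.
rewrite mulmxKV // mul1mx mulmx1 mul_col_row scale_block_mx !add_block_mx.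
rewrite !scaler0 !addr0 !add0r mulmx1 mulKVmx // !mulmxA addrA.
by congr block_mx; rewrite addrC addrA !subrK.
Qed.

End QuadraticForm.

Section Chain.
Variables (R : realFieldType) (nx nu : nat) (ny : nat -> nat).
Variables (F : 'M[R]_(nu, nx)) (A : forall i, 'M[R]_(ny i, nx)).
Variables (P E : forall i, 'M[R]_(ny i)) (sigma : R) (Sf Tf : 'M[R]_nu).

(* The diagonal term of the k-th chain matrix; at k = 0 it is T_f itself,
   whereas [chDiag] is [0] there. *)
Definition chBase (k : nat) : 'M[R]_(chdim nu ny k) :=
  match k with 0 => Tf | k'.+1 => chDiag F A P E sigma Tf k'.+1 end.

Definition chMx (k : nat) : 'M[R]_(chdim nu ny k) :=
  chF F A k *m (chF F A k)^T + sigma^-1 *: chSig P Sf k + chBase k.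

Lemma chT_chBase k :
  chT F A P E sigma Tf k
  = chBase k + chF F A k *m (A k)^T *m invmx (E k) *m A k *m (chF F A k)^T.
Proof. by case: k. Qed.

Hypotheses (symSf : Sf^T = Sf) (symTf : Tf^T = Tf).

Lemma chMx0_sym : (chMx 0)^T = chMx 0.
Proof. by rewrite /chMx /= !linearD /= linearZ /= symSf symTf trmx_mul trmxK. Qed.

Lemma chMxS k : pdmx (E k) ->
  chMx k.+1 = block_mx (chMx k) 0 0 0
    + col_mx (chF F A k *m (A k)^T *m invmx (E k)) 1%:M *m E k
      *m (col_mx (chF F A k *m (A k)^T *m invmx (E k)) 1%:M)^T.
Proof.
move=> pdE; rewrite [LHS]/chMx /= chT_chBase.
exact: schur_step_decomposition (pdmx_unit pdE) pdE.1.
Qed.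

Lemma chMx_sym_pdmx k : (forall i, (i < k)%N -> pdmx (E i)) ->
  (chMx k)^T = chMx k /\ (pdmx (chMx k) <-> pdmx (chMx 0)).
Proof.
elim: k => [|k IHk] pdE; first by split; [exact: chMx0_sym | ].
have [symN pdN] := IHk (fun i ik => pdE i (ltnW ik)).
have pdEk := pdE k (ltnSn k).
rewrite chMxS //; split; last exact: iff_trans (pdmx_diag0_add_conj _ symN pdEk) pdN.
by rewrite linearD /= tr_block_mx symN !trmx0 !trmx_mul trmxK pdEk.1 mulmxA.
Qed.

Lemma pdmx_chain p : (0 < p)%N -> (forall i, (i < p)%N -> pdmx (E i)) ->
  pdmx (chF F A p *m (chF F A p)^T + sigma^-1 *: chSig P Sf p
          + chDiag F A P E sigma Tf p)
  <-> pdmx (F *m F^T + sigma^-1 *: Sf + Tf).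
Proof. by case: p => // p _ /chMx_sym_pdmx []. Qed.

End Chain.

Theorem proposition3p3 (R : realFieldType) (p q : nat)
  (nx nu nv : nat) (ny nz : nat -> nat)
  (F : 'M[R]_(nu, nx)) (G : 'M[R]_(nv, nx))
  (A : forall i, 'M[R]_(ny i, nx)) (B : forall j, 'M[R]_(nz j, nx))
  (sigma : R)
  (P Eth : forall i, 'M[R]_(ny i)) (Q Eph : forall j, 'M[R]_(nz j))
  (Sf Tf : 'M[R]_nu) (Sg Tg : 'M[R]_nv) :
  (0 < p)%N -> (0 < q)%N -> 0 < sigma ->
  (forall i, (i < p)%N -> psdmx (P i)) ->
  (forall j, (j < q)%N -> psdmx (Q j)) ->
  psdmx Sf -> psdmx Sg -> psdmx Tf -> psdmx Tg ->
  (forall i, (i < p)%N -> pdmx (Eth i)) ->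
  (forall i, (i < p)%N -> psdmx (Ttheta A P Eth sigma i)) ->
  (forall j, (j < q)%N -> pdmx (Eph j)) ->
  (forall j, (j < q)%N -> psdmx (Ttheta B Q Eph sigma j)) ->
  (pdmx (chF F A p *m (chF F A p)^T + sigma^-1 *: chSig P Sf p
           + chDiag F A P Eth sigma Tf p)
   <-> pdmx (F *m F^T + sigma^-1 *: Sf + Tf))
  /\
  (pdmx (chF G B q *m (chF G B q)^T + sigma^-1 *: chSig Q Sg q
           + chDiag G B Q Eph sigma Tg q)
   <-> pdmx (G *m G^T + sigma^-1 *: Sg + Tg)).
Proof.
move=> p_gt0 q_gt0 _ _ _ [symSf _] [symSg _] [symTf _] [symTg _] pdEth _ pdEph _.
by split; apply: pdmx_chain.
Qed.
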